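(* Let $K$ be an algebraically closed field complete with respect to a non-archimedean absolute value, let $\lambda_3\in K$, let $\sqrt{1-\lambda_3}$ denote a fixed square root, and let $\varphi(z)=z+\sqrt{1-\lambda_3}+\frac1z$. Let $\xi$ be the unique point of $\mathbb{P}^1_{\mathrm{Berk}}$ with $w_\varphi(\xi)=1$. (A) If $|\lambda_3|\le1$, then $\xi=\zeta_G$ and $\xi$ satisfies (W1). (B) If $|\lambda_3|>1$, then $\xi=\zeta_{D(0,\sqrt{|\lambda_3|})}$ and $\xi$ satisfies (W3).
   Context: $\varphi$ has degree 2, fixed points $\infty$ (double, multiplier $1$) and $-1/\sqrt{1-\lambda_3}$ (multiplier $\lambda_3$). $\mathbb{P}^1_{\mathrm{Berk}}$ is the Berkovich projective line over $K$; $\zeta_{D(a,r)}$ is the point corresponding to the disc $D(a,r)=\{x:|x-a|\le r\}$, $\zeta_G=\zeta_{D(0,1)}$. Let $\mathcal{O},\mathfrak{m},k$ be the valuation ring, maximal ideal, residue field. For a type II point $P=\gamma(\zeta_G)$, $\gamma\in\mathrm{PGL}_2(K)$, the reduction $\tilde\varphi_P$ is the reduction mod $\mathfrak{m}$ of a normalized lift (coefficients in $\mathcal{O}$, one a unit) of $\gamma^{-1}\circ\varphi\circ\gamma$, after cancelling common factors; $P$ is fixed by $\varphi$ iff $\tilde\varphi_P$ is nonconstant. $\Gamma_{\mathrm{Fix}}$ is the tree spanned by the classical fixed points; $\Gamma_{\mathrm{Fix,Repel}}$ the tree spanned by classical fixed points and type II fixed points with $\deg\tilde\varphi_P\ge2$,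 $v(P)$ the valence there. Weight $w_\varphi(P)$: for type II fixed $P$, $\deg\tilde\varphi_P-1+N(P)$, $N(P)$ the number of tangent directions at $P$ containing classical fixed points that are moved by $\varphi_*$; for a branch point of $\Gamma_{\mathrm{Fix}}$ moved by $\varphi$, $v(P)-2$; else $0$. For degree 2 exactly one point has positive weight, equal to 1. (W1): $P$ fixed with $\deg\tilde\varphi_P\ge2$. (W3): $P$ fixed, $\tilde\varphi_P$ conjugate over $k$ to $z+\tilde a$, $\tilde a\in k^\times$, and $P\in\Gamma_{\mathrm{Fix}}$. *)

From HB Require Import structures.
From mathcomp Require Import all_boot all_order all_algebra.
From mathcomp Require Import reals.
From Stdlib Require Import ClassicalEpsilon.

Set Implicit Arguments.
Unset Strict Implicit.
Unset Printing Implicit Defensive.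

Import Order.TTheory GRing.Theory Num.Theory.
Local Open Scope ring_scope.

(* If the predicate is not satisfied by a finite set, the value is 0.        *)
Definition ncount {T : eqType} (p : T -> Prop) : nat :=
  match excluded_middle_informative
          (exists l : seq T, uniq l /\ forall x, x \in l <-> p x) with
  | left H => size (proj1_sig (constructive_indefinite_description _ H))
  | right _ => 0%N
  end.

Record nonarch_abs (K : fieldType) (R : realType) (absK : K -> R) : Prop := {
  nabs_ge0 : forall x, 0 <= absK x;
  nabs_eq0 : forall x, absK x = 0 <-> x = 0;
  nabs_mul : forall x y, absK (x * y) = absK x * absK y;
  nabs_ultra : forall x y, absK (x + y) <= Num.max (absK x) (absK y)
}.

Definition complete_abs (K : fieldType) (R : realType) (absK : K -> R) : Prop :=
  forall u : nat -> K,
    (forall e : R, 0 < e -> exists N : nat, forall m n : nat,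
        (N <= m)%N -> (N <= n)%N -> absK (u m - u n) < e) ->
    exists l : K, forall e : R, 0 < e -> exists N : nat, forall n : nat,
        (N <= n)%N -> absK (u n - l) < e.

(* red : K -> k restricted to the valuation ring O = {|x| <= 1} is a
   surjective ring morphism O -> k whose kernel is m = {|x| < 1};
   i.e. k is (a copy of) the residue field O/m and red the reduction map.
   Values of red outside O are irrelevant (never used). *)
Record residue_map (K : fieldType) (R : realType) (absK : K -> R)
    (k : fieldType) (red : K -> k) : Prop := {
  red_add : forall x y, absK x <= 1 -> absK y <= 1 -> red (x + y) = red x + red y;
  red_mul : forall x y, absK x <= 1 -> absK y <= 1 -> red (x * y) = red x * red y;
  red_one : red 1 = 1;
  red_eq0 : forall x, absK x <= 1 -> (red x = 0 <-> absK x < 1);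
  red_surj : forall t : k, exists x, absK x <= 1 /\ red x = t
}.

Section Weights.
Variables (K : fieldType) (R : realType) (absK : K -> R)
          (k : fieldType) (red : K -> k).
(* The rational map phi = F / G, with F, G in K[z] coprime. *)
Variables (F G : {poly K}).

(* Type II points: (a, b) with b != 0 represents zeta_{D(a,|b|)} = gamma(zeta_G)
   for gamma(z) = a + b z.  Two pairs represent the same point iff the discs agree. *)
Definition same_point (P Q : K * K) : Prop :=
  absK P.2 = absK Q.2 /\ absK (P.1 - Q.1) <= absK P.2.

(* gamma^{-1} o phi o gamma, gamma(z) = a + b z, as the pair (numerator, denominator). *)
Definition conj_num (a b : K) : {poly K} :=
  F \Po (a%:P + b *: 'X) - a *: (G \Po (a%:P + b *: 'X)).
Definition conj_den (a b : K) : {poly K} := b *: (G \Po (a%:P + b *: 'X)).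

Definition maxcoef (l : seq K) : K :=
  foldr (fun x m => if absK m < absK x then x else m) 0 l.

Definition norm_const (a b : K) : K :=
  maxcoef (polyseq (conj_num a b) ++ polyseq (conj_den a b)).

Definition redF0 (a b : K) : {poly k} :=
  map_poly red ((norm_const a b)^-1 *: conj_num a b).
Definition redG0 (a b : K) : {poly k} :=
  map_poly red ((norm_const a b)^-1 *: conj_den a b).

Definition redF (a b : K) : {poly k} := redF0 a b %/ gcdp (redF0 a b) (redG0 a b).
Definition redG (a b : K) : {poly k} := redG0 a b %/ gcdp (redF0 a b) (redG0 a b).

Definition red_deg (a b : K) : nat := (maxn (size (redF a b)) (size (redG a b))).-1.

(* tilde(phi)_P acting on P^1(k) = option k (None = infinity). *)
Definition red_map (a b : K) (t : option k) : option k :=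
  let f := redF a b in let g := redG a b in
  match t with
  | Some z => if g.[z] != 0 then Some (f.[z] / g.[z]) else None
  | None => if (size g < size f)%N then None
            else if size f == size g then Some (lead_coef f / lead_coef g)
            else Some 0
  end.

Definition classical_fixed (x : option K) : Prop :=
  match x with
  | Some z => F.[z] = z * G.[z]
  | None => (size G < size F)%N
  end.

(* tangent direction at P = zeta_{D(a,|b|)} (labelled by P^1(k)) containing a
   classical point *)
Definition dir_classical (a b : K) (x : option K) : option k :=
  match x with
  | Some z => if absK (z - a) <= absK b then Some (red ((z - a) / b)) else None
  | None => None
  end.

(* tangent direction at P = (a,b) containing the type II point Q = (c,d) != P *)
Definition dir_typeII (a b c d : K) : option k :=
  if (absK (c - a) <= absK b) && (absK d < absK b) then Some (red ((c - a) / b))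
  else None.

Definition is_fixedII (a b : K) : Prop := (1 <= red_deg a b)%N.

Definition N_moved (a b : K) : nat :=
  ncount (fun v : option k =>
    (exists x, classical_fixed x /\ dir_classical a b x = v) /\ red_map a b v <> v).

(* valence of a type II point in Gamma_Fix (>= 2 iff P lies in Gamma_Fix) *)
Definition val_Fix (a b : K) : nat :=
  ncount (fun v : option k => exists x, classical_fixed x /\ dir_classical a b x = v).

Definition val_FixRepel (a b : K) : nat :=
  ncount (fun v : option k =>
    (exists x, classical_fixed x /\ dir_classical a b x = v) \/
    (exists c d, d != 0 /\ (2 <= red_deg c d)%N /\ ~ same_point (c, d) (a, b)
                 /\ dir_typeII a b c d = v)).

Definition weight (a b : K) : nat :=
  if (1 <= red_deg a b)%N then (red_deg a b - 1 + N_moved a b)%N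
  else if (3 <= val_Fix a b)%N then (val_FixRepel a b - 2)%N
  else 0%N.

Definition W1 (a b : K) : Prop := (2 <= red_deg a b)%N.

Definition mobius (al be ga de : k) (t : option k) : option k :=
  match t with
  | Some z => if ga * z + de != 0 then Some ((al * z + be) / (ga * z + de)) else None
  | None => if ga != 0 then Some (al / ga) else None
  end.
Definition transl (c : k) (t : option k) : option k :=
  match t with Some z => Some (z + c) | None => None end.

Definition W3 (a b : K) : Prop :=
  is_fixedII a b /\
  (exists al be ga de c : k, al * de - be * ga != 0 /\ c != 0 /\
     forall t, red_map a b (mobius al be ga de t) = mobius al be ga de (transl c t)) /\
  (2 <= val_Fix a b)%N.

End Weights.

From HB Require Import structures.
From mathcomp Require Import all_boot all_order all_algebra.
From mathcomp Require Import reals.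
From mathcomp Require Import ring lra.
From Stdlib Require Import ClassicalEpsilon.
Import Order.TTheory GRing.Theory Num.Theory.
Local Open Scope ring_scope.

Set Implicit Arguments.
Unset Strict Implicit.
Unset Printing Implicit Defensive.

(* Write P = zeta_{D(a,|b|)}.  Conjugating phi by z |-> a + b z gives the pair
   (b^2 z^2 + b (a + s) z + (1 + s a), b^2 z + a b), and its normalising
   constant c has |c| >= |b|^2.  If |c| > |b|^2 the reduction has degree at most
   one and fixes the directions of both fixed points, so the weight is 0.  If
   |c| = |b|^2 then |a|, |s| <= |b| and |b| >= 1.  For |b| = 1 the reduction is
   a quadratic map fixing those directions: weight 1 and (W1).  For |b| > 1 the
   factor z + a/b cancels and the reduction is the translation z |-> z + e,
   where e is the reduction of s/b; it moves the direction of the finite fixed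
   point -1/s exactly when |s| = |b|: weight 1 and (W3) there, weight 0
   otherwise.  Hence the point of weight 1 is zeta_{D(0, max(1, |s|))}, and
   |s|^2 = |1 - lambda3| is <= 1 when |lambda3| <= 1 and equals |lambda3|
   otherwise. *)

Section ReducedMap.
Variable k : fieldType.

Definition rdeg (f g : {poly k}) : nat := (maxn (size f) (size g)).-1.

Definition rmap (f g : {poly k}) (t : option k) : option k :=
  match t with
  | Some z => if g.[z] != 0 then Some (f.[z] / g.[z]) else None
  | None => if (size g < size f)%N then None
            else if size f == size g then Some (lead_coef f / lead_coef g)
            else Some 0
  end.

Lemma rdegZ v f g : v != 0 -> rdeg (v *: f) (v *: g) = rdeg f g.
Proof. by move=> hv; rewrite /rdeg !size_scale. Qed.

Lemma rmapZ v f g t : v != 0 -> rmap (v *: f) (v *: g) t = rmap f g t.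
Proof.
move=> hv; case: t => [z|] /=.
  rewrite !hornerZ mulf_eq0 (negbTE hv) /=.
  by case: ifP => // _; rewrite invfM mulrACA divff // mul1r.
rewrite !size_scale // !lead_coefZ.
by case: ifP => // _; case: ifP => // _; rewrite invfM mulrACA divff // mul1r.
Qed.

Lemma mobius_id (t : option k) : mobius 1 0 0 1 t = t.
Proof.
case: t => [z|] /=; last by rewrite eqxx.
by rewrite mul0r add0r oner_neq0 mul1r addr0 divr1.
Qed.

Lemma divp_gcdp_mul2l (f g h f' g' : {poly k}) :
  h != 0 -> coprimep f' g' -> f = h * f' -> g = h * g' ->
  exists2 v, v != 0 & f %/ gcdp f g = v *: f' /\ g %/ gcdp f g = v *: g'.
Proof.
move=> hh hc -> ->.
have : gcdp (h * f') (h * g') %= h.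
  apply: eqp_trans (gcdp_mul2l _ _ _) _.
  by rewrite -{2}(mulr1 h); apply: eqp_mull; rewrite gcdp_eqp1.
case/eqpP=> [[c1 c2]] /= /andP [hc1 hc2] e.
have -> : gcdp (h * f') (h * g') = (c2 / c1) *: h.
  by rewrite [c2 / c1]mulrC -scalerA -e scalerA mulVf // scale1r.
have hw : c2 / c1 != 0 by rewrite mulf_neq0 // invr_eq0.
by exists (c2 / c1)^-1; rewrite ?invr_eq0 // !divpZr // !mulKp.
Qed.

End ReducedMap.

Lemma ncount_eq (T : eqType) (p : T -> Prop) (l : seq T) :
  uniq l -> (forall x, x \in l <-> p x) -> ncount p = size l.
Proof.
move=> ul hl; rewrite /ncount.
case: excluded_middle_informative => [H|[]]; last by exists l.
case: (constructive_indefinite_description _ H) => l' [u' h'] /=.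
apply: perm_size; apply: uniq_perm => // x.
by apply/idP/idP => [/h' /hl|/hl /h'].
Qed.

Lemma ncount_le (T : eqType) (p : T -> Prop) (l : seq T) :
  (forall x, p x -> x \in l) -> (ncount p <= size l)%N.
Proof.
move=> hl; rewrite /ncount.
case: excluded_middle_informative => [H|_] //.
case: (constructive_indefinite_description _ H) => l' [u' h'] /=.
by apply: uniq_leq_size => // x /h' /hl.
Qed.

Section NonarchAbs.
Variables (K : fieldType) (R : realType) (absK : K -> R).
Hypothesis HA : nonarch_abs absK.

Lemma nabs0 : absK 0 = 0. Proof. exact/(nabs_eq0 HA). Qed.

Lemma nabs_eq0E x : (absK x == 0) = (x == 0).
Proof. by apply/eqP/eqP => /(nabs_eq0 HA). Qed.

Lemma nabs_gt0 x : x != 0 -> 0 < absK x.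
Proof. by move=> hx; rewrite lt_def nabs_eq0E hx (nabs_ge0 HA). Qed.

Lemma nabs1 : absK 1 = 1.
Proof.
have h1 : absK 1 != 0 by rewrite nabs_eq0E oner_eq0.
by apply: (mulfI h1); rewrite -(nabs_mul HA) !mulr1.
Qed.

Lemma nabsN x : absK (- x) = absK x.
Proof.
have hN1 : absK (-1) = 1.
  apply/eqP; rewrite -sqrp_eq1 ?(nabs_ge0 HA) //.
  by rewrite expr2 -(nabs_mul HA) mulrNN mulr1 nabs1 eqxx.
by rewrite -mulN1r (nabs_mul HA) hN1 mul1r.
Qed.

Lemma nabsV x : absK x^-1 = (absK x)^-1.
Proof.
have [->|hx] := eqVneq x 0; first by rewrite invr0 nabs0 invr0.
apply: (mulIf (lt0r_neq0 (nabs_gt0 hx))).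
by rewrite -(nabs_mul HA) !mulVf ?nabs1 ?nabs_eq0E.
Qed.

Lemma nabsD_le x y r : absK x <= r -> absK y <= r -> absK (x + y) <= r.
Proof. by move=> hx hy; apply: le_trans (nabs_ultra HA x y) _; rewrite ge_max hx. Qed.

Lemma nabsD_lt x y r : absK x < r -> absK y < r -> absK (x + y) < r.
Proof. by move=> hx hy; apply: le_lt_trans (nabs_ultra HA x y) _; rewrite gt_max hx. Qed.

Lemma nabsD_eq x y : absK x < absK y -> absK (x + y) = absK y.
Proof.
move=> hxy; apply/eqP; rewrite eq_le nabsD_le ?(ltW hxy) //=.
rewrite leNgt; apply/negP => h.
have : absK ((x + y) + - x) < absK y by rewrite nabsD_lt ?nabsN.
by rewrite addrC addKr ltxx.
Qed.

Lemma nabsM_le1 x y : absK x <= 1 -> absK y <= 1 -> absK (x * y) <= 1.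
Proof. by move=> hx hy; rewrite (nabs_mul HA) mulr_ile1 ?(nabs_ge0 HA). Qed.

Lemma nabs_invM_le1 x y : y != 0 -> absK x <= absK y -> absK (y^-1 * x) <= 1.
Proof.
move=> hy hx; have hy' := nabs_gt0 hy.
by rewrite (nabs_mul HA) nabsV mulrC ler_pdivrMr // mul1r.
Qed.

Lemma nabs_sqrt1B_le1 x l : x ^+ 2 = 1 - l -> absK l <= 1 -> absK x <= 1.
Proof.
move=> hx hl; have hx0 := nabs_ge0 HA x.
have : absK x * absK x <= 1.
  by rewrite -(nabs_mul HA) -expr2 hx nabsD_le ?nabsN ?nabs1.
nra.
Qed.

Lemma nabs_sqrt1B_gt1 x l : x ^+ 2 = 1 - l -> 1 < absK l ->
  1 < absK x /\ Num.sqrt (absK l) = absK x.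
Proof.
move=> hx hl; have hx0 := nabs_ge0 HA x.
have hlx : absK l = absK x ^+ 2.
  have hl' : absK 1 < absK (- l) by rewrite nabsN nabs1.
  by rewrite expr2 -(nabs_mul HA) -expr2 hx (nabsD_eq hl') nabsN.
rewrite hlx sqrtr_sqr ger0_norm //; split=> //.
by move: hl; rewrite hlx expr2; nra.
Qed.

End NonarchAbs.

Section Maxcoef.
Variables (K : fieldType) (R : realType) (absK : K -> R).

Lemma maxcoef_ge (l : seq K) x : x \in l -> absK x <= absK (maxcoef absK l).
Proof.
elim: l => //= y l IH; rewrite inE => /orP [/eqP ->|hx].
  by case: ifP => // /negbT; rewrite -leNgt.
by case: ifP => [/ltW|_]; [apply: le_trans (IH hx) | apply: IH].
Qed.

Lemma maxcoef_in (l : seq K) : maxcoef absK l = 0 \/ maxcoef absK l \in l.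
Proof.
elim: l => /= [|y l [IH|IH]]; first by left.
all: case: ifP => _; rewrite ?inE ?eqxx ?IH ?orbT; by [left|right].
Qed.

End Maxcoef.

Section QuadLin.
Variable k : fieldType.

Definition quad (c0 c1 c2 : k) : {poly k} := c0%:P + c1 *: 'X + c2 *: 'X^2.
Definition lin (c0 c1 : k) : {poly k} := c0%:P + c1 *: 'X.

Lemma quadE c0 c1 c2 : quad c0 c1 c2 = Poly [:: c0; c1; c2].
Proof.
apply/polyP => i; rewrite coef_Poly /quad !coefD coefC !coefZ coefX coefXn.
by case: i => [|[|[|i]]] /=; rewrite ?mulr0 ?mulr1 ?addr0 ?add0r //; case: i.
Qed.

Lemma linE c0 c1 : lin c0 c1 = Poly [:: c0; c1].
Proof.
apply/polyP => i; rewrite coef_Poly /lin !coefD coefC !coefZ coefX.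
by case: i => [|[|i]] /=; rewrite ?mulr0 ?mulr1 ?addr0 ?add0r //; case: i.
Qed.

Lemma quad_lin c0 c1 : quad c0 c1 0 = lin c0 c1.
Proof. by rewrite /quad scale0r addr0. Qed.

Lemma lin_polyC c0 : lin c0 0 = c0%:P.
Proof. by rewrite /lin scale0r addr0. Qed.

Lemma size_quad c0 c1 c2 : c2 != 0 -> size (quad c0 c1 c2) = 3%N.
Proof. by move=> h; rewrite quadE (@PolyK _ 0). Qed.

Lemma size_lin c0 c1 : c1 != 0 -> size (lin c0 c1) = 2%N.
Proof. by move=> h; rewrite linE (@PolyK _ 0). Qed.

Lemma horner_quad c0 c1 c2 x : (quad c0 c1 c2).[x] = c0 + c1 * x + c2 * x ^+ 2.
Proof. by rewrite /quad !hornerE. Qed.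

Lemma horner_lin c0 c1 x : (lin c0 c1).[x] = c0 + c1 * x.
Proof. by rewrite /lin !hornerE. Qed.

Lemma lin_XsubC c0 c1 t : c0 + c1 * t = 0 -> lin c0 c1 = c1 *: ('X - t%:P).
Proof.
move=> h; have -> : c0 = - (c1 * t) by apply/eqP; rewrite -addr_eq0 h.
rewrite /lin -!mul_polyC rmorphN rmorphM /=; ring.
Qed.

Lemma quad_XsubC c0 c1 c2 t : c0 + c1 * t + c2 * t ^+ 2 = 0 ->
  quad c0 c1 c2 = ('X - t%:P) * lin (c1 + c2 * t) c2.
Proof.
move=> h; have -> : c0 = - (c1 * t + c2 * t ^+ 2).
  by apply/eqP; rewrite -addr_eq0 addrA h.
rewrite /quad /lin -!mul_polyC !rmorphN !rmorphD !rmorphM /= ?rmorphXn /=; ring.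
Qed.

Lemma coprimep_lin (f : {poly k}) c0 c1 t : c1 != 0 -> c0 + c1 * t = 0 ->
  ~~ root f t -> coprimep f (lin c0 c1).
Proof. by move=> h1 h ht; rewrite (lin_XsubC h) coprimepZr // coprimep_XsubC. Qed.

Lemma coprimep_polyC (f : {poly k}) c : c != 0 -> coprimep f c%:P.
Proof. by move=> hc; rewrite -[c%:P]mulr1 mul_polyC coprimepZr // coprimep1. Qed.

Lemma rmap_lin_polyC q c : c != 0 -> forall t, rmap (lin q c) c%:P t = transl (q / c) t.
Proof.
move=> hc [z|] /=; last by rewrite size_polyC hc size_lin.
by rewrite hornerC hc horner_lin; congr Some; field.
Qed.

Lemma rdeg_lin_polyC q c : c != 0 -> rdeg (lin q c) c%:P = 1%N.
Proof. by move=> hc; rewrite /rdeg size_polyC hc size_lin. Qed.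

End QuadLin.

Section Residue.
Variables (K : fieldType) (R : realType) (absK : K -> R) (k : fieldType) (red : K -> k).
Hypotheses (HA : nonarch_abs absK) (HR : residue_map absK red).

Lemma red0 : red 0 = 0.
Proof. by apply/(red_eq0 HR); rewrite (nabs0 HA) ?ltr01. Qed.

Lemma red_lt1 x : absK x < 1 -> red x = 0.
Proof. by move=> h; apply/(red_eq0 HR) => //; apply: ltW. Qed.

Lemma red_neq0 x : absK x = 1 -> red x != 0.
Proof.
move=> h; apply/eqP => /(red_eq0 HR).
by rewrite h lexx ltxx => /(_ isT).
Qed.

Lemma red_horner2 u0 u1 u2 x : absK u0 <= 1 -> absK u1 <= 1 -> absK u2 <= 1 ->
  absK x <= 1 ->
  red (u0 + u1 * x + u2 * x ^+ 2) = red u0 + red u1 * red x + red u2 * red x ^+ 2.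
Proof.
move=> h0 h1 h2 hx; have hx2 : absK (x ^+ 2) <= 1 by rewrite expr2 nabsM_le1.
by rewrite !(red_add HR) ?(nabsD_le HA) ?nabsM_le1 // !(red_mul HR) ?nabsM_le1.
Qed.

Lemma red_horner1 u0 u1 x : absK u0 <= 1 -> absK u1 <= 1 -> absK x <= 1 ->
  red (u0 + u1 * x) = red u0 + red u1 * red x.
Proof. by move=> h0 h1 hx; rewrite (red_add HR) ?nabsM_le1 // (red_mul HR). Qed.

Lemma map_red_quad v c0 c1 c2 :
  map_poly red (v *: quad c0 c1 c2) = quad (red (v * c0)) (red (v * c1)) (red (v * c2)).
Proof.
apply/polyP => i; rewrite coef_map_id0 ?red0 // coefZ !quadE !coef_Poly.
by case: i => [|[|[|i]]] //=; rewrite ?nth_nil mulr0 red0.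
Qed.

Lemma map_red_lin v c0 c1 :
  map_poly red (v *: lin c0 c1) = lin (red (v * c0)) (red (v * c1)).
Proof.
apply/polyP => i; rewrite coef_map_id0 ?red0 // coefZ !linE !coef_Poly.
by case: i => [|[|i]] //=; rewrite ?nth_nil mulr0 red0.
Qed.

End Residue.

Section QuadraticMap.
Variables (K : fieldType) (R : realType) (absK : K -> R) (k : fieldType) (red : K -> k).
Variable s : K.
Hypotheses (HA : nonarch_abs absK) (HR : residue_map absK red).
Local Notation F := ('X^2 + s *: 'X + 1 : {poly K}).
Local Notation G := ('X : {poly K}).
Local Notation nc := (norm_const absK F G).

Lemma conj_numE a b : conj_num F G a b = quad (1 + s * a) (b * (a + s)) (b ^+ 2).
Proof.
rewrite /conj_num /quad !comp_polyD comp_Xn_poly comp_polyZ comp_polyX -polyC1 comp_polyC.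
rewrite -!mul_polyC !rmorphD !rmorphM /= ?rmorphXn /=; ring.
Qed.

Lemma conj_denE a b : conj_den G a b = lin (a * b) (b ^+ 2).
Proof. by rewrite /conj_den /lin comp_polyX -!mul_polyC rmorphM /=; ring. Qed.

Lemma norm_const_ge a b :
  [/\ absK (1 + s * a) <= absK (nc a b), absK (b * (a + s)) <= absK (nc a b),
      absK (b ^+ 2) <= absK (nc a b) & absK (a * b) <= absK (nc a b)].
Proof.
have hcoef (p : {poly K}) i : p = conj_num F G a b \/ p = conj_den G a b ->
    absK p`_i <= absK (nc a b).
  move=> hp; have [hi|hi] := ltnP i (size p).
    by apply: maxcoef_ge; rewrite mem_cat; case: hp => <-; rewrite mem_nth ?orbT.
  by rewrite nth_default // (nabs0 HA) (nabs_ge0 HA).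
have hn i : absK (conj_num F G a b)`_i <= absK (nc a b) by apply: hcoef; left.
have hd i : absK (conj_den G a b)`_i <= absK (nc a b) by apply: hcoef; right.
move: (hn 0%N) (hn 1%N) (hn 2%N) (hd 0%N).
by rewrite conj_numE conj_denE quadE linE !coef_Poly.
Qed.

Lemma norm_const_neq0 a b : b != 0 -> nc a b != 0.
Proof.
move=> hb; rewrite -(nabs_eq0E HA) gt_eqF //.
case: (norm_const_ge a b) => _ _ h _; apply: lt_le_trans h.
by rewrite (nabs_gt0 HA) // expf_neq0.
Qed.

Lemma norm_const_cases a b : b != 0 ->
  [\/ nc a b = 1 + s * a, nc a b = b * (a + s), nc a b = b ^+ 2 | nc a b = a * b].
Proof.
move=> hb.
have pn : polyseq (conj_num F G a b) = [:: 1 + s * a; b * (a + s); b ^+ 2].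
  by rewrite conj_numE quadE (@PolyK _ 0) ?expf_neq0.
have pd : polyseq (conj_den G a b) = [:: a * b; b ^+ 2].
  by rewrite conj_denE linE (@PolyK _ 0) ?expf_neq0.
case: (maxcoef_in absK (polyseq (conj_num F G a b) ++ polyseq (conj_den G a b))).
  by move=> h; move: (norm_const_neq0 a hb); rewrite /norm_const h eqxx.
rewrite -/(norm_const absK F G a b) pn pd /= !inE.
by move=> /orP [/eqP ->|/orP [/eqP ->|/orP [/eqP ->|/orP [/eqP ->|/eqP ->]]]];
  by [constructor 1|constructor 2|constructor 3|constructor 4].
Qed.

Definition fc0 a b := red ((nc a b)^-1 * (1 + s * a)).
Definition fc1 a b := red ((nc a b)^-1 * (b * (a + s))).
Definition fc2 a b := red ((nc a b)^-1 * b ^+ 2).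
Definition gc0 a b := red ((nc a b)^-1 * (a * b)).

Lemma redF0E a b : redF0 absK red F G a b = quad (fc0 a b) (fc1 a b) (fc2 a b).
Proof. by rewrite /redF0 conj_numE (map_red_quad HA HR). Qed.

Lemma redG0E a b : redG0 absK red F G a b = lin (gc0 a b) (fc2 a b).
Proof. by rewrite /redG0 conj_denE (map_red_lin HA HR). Qed.

Lemma horner_redF0 a b x : b != 0 -> absK x <= 1 ->
  (quad (fc0 a b) (fc1 a b) (fc2 a b)).[red x] =
  red ((nc a b)^-1 * (b ^+ 2 * x ^+ 2 + b * (a + s) * x + (1 + s * a))).
Proof.
move=> hb hx; have hc := norm_const_neq0 a hb.
case: (norm_const_ge a b) => h0 h1 h2 _.
rewrite horner_quad /fc0 /fc1 /fc2 -(red_horner2 HA HR) ?(nabs_invM_le1 HA) //.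
by congr red; ring.
Qed.

Lemma horner_redG0 a b x : b != 0 -> absK x <= 1 ->
  (lin (gc0 a b) (fc2 a b)).[red x] = red ((nc a b)^-1 * (b ^+ 2 * x + a * b)).
Proof.
move=> hb hx; have hc := norm_const_neq0 a hb.
case: (norm_const_ge a b) => _ _ h2 h3.
rewrite horner_lin /gc0 /fc2 -(red_horner1 HA HR) ?(nabs_invM_le1 HA) //.
by congr red; ring.
Qed.

(* over a finite fixed point z this holds before reduction, because
   F(z) - z G(z) = s z + 1 = 0 *)
Lemma horner_red_fixed a b z : b != 0 -> s * z + 1 = 0 -> absK (z - a) <= absK b ->
  (quad (fc0 a b) (fc1 a b) (fc2 a b)).[red ((z - a) / b)] =
  red ((z - a) / b) * (lin (gc0 a b) (fc2 a b)).[red ((z - a) / b)].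
Proof.
move=> hb hz hza; set x := (z - a) / b.
have hx : absK x <= 1 by rewrite /x mulrC (nabs_invM_le1 HA).
have hc := norm_const_neq0 a hb.
case: (norm_const_ge a b) => _ _ h2 h3.
have hw : absK (b ^+ 2 * x + a * b) <= absK (nc a b).
  apply: (nabsD_le HA) => //; rewrite (nabs_mul HA); apply: le_trans h2.
  by rewrite ler_piMr ?(nabs_ge0 HA).
rewrite horner_redF0 // horner_redG0 // -(red_mul HR) ?(nabs_invM_le1 HA) //.
congr red; apply/eqP; rewrite -subr_eq0.
have -> : (nc a b)^-1 * (b ^+ 2 * x ^+ 2 + b * (a + s) * x + (1 + s * a)) -
   x * ((nc a b)^-1 * (b ^+ 2 * x + a * b)) = (nc a b)^-1 * (s * z + 1).
  by rewrite /x; field; rewrite hc hb.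
by rewrite hz mulr0.
Qed.

Lemma size_F : size F = 3%N.
Proof.
have -> : F = quad 1 s 1 by rewrite /quad -!mul_polyC polyC1; ring.
by rewrite size_quad ?oner_eq0.
Qed.

Lemma classical_fixedP x : classical_fixed F G x <->
  x = None \/ exists z, x = Some z /\ s * z + 1 = 0.
Proof.
case: x => [z|] /=; last by rewrite size_F size_polyX; split => // _; left.
rewrite !hornerE; split=> [h|[//|[_ [[<-] h]]]].
  right; exists z; split=> //.
  have -> : s * z + 1 = z ^+ 2 + s * z + 1 - z * z by ring.
  by rewrite h subrr.
have -> : z ^+ 2 + s * z + 1 = z * z + (s * z + 1) by ring.
by rewrite h addr0.
Qed.

Lemma fixed_ptE z : s * z + 1 = 0 -> z = - s^-1.
Proof.
move=> hz; have hs : s != 0.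
  by apply: contra_eq_neq hz => ->; rewrite mul0r add0r oner_neq0.
by apply: (mulfI hs); rewrite mulrN mulfV //; apply/eqP; rewrite -addr_eq0 hz.
Qed.

Lemma val_Fix_le2 a b : (val_Fix absK red F G a b <= 2)%N.
Proof.
apply: (ncount_le (l := [:: None; Some (red ((- s^-1 - a) / b))])).
move=> v [x [/classical_fixedP [->|[z [-> hz]]] <-]] /=; rewrite !inE ?eqxx //.
by rewrite (fixed_ptE hz); case: ifP => _; rewrite ?eqxx ?orbT.
Qed.

(* Gamma_Fix is a segment, so the branch-point clause of [weight] never applies. *)
Lemma weight_fixedE a b : weight absK red F G a b =
  if (1 <= red_deg absK red F G a b)%N then
    (red_deg absK red F G a b - 1 + N_moved absK red F G a b)%N else 0%N.
Proof.
by rewrite /weight; case: ifP => // _; rewrite ltnNge (leq_trans (val_Fix_le2 a b)).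
Qed.

Lemma N_moved_eq0 a b : red_map absK red F G a b None = None ->
  (forall z, s * z + 1 = 0 -> absK (z - a) <= absK b ->
     red_map absK red F G a b (Some (red ((z - a) / b))) = Some (red ((z - a) / b))) ->
  N_moved absK red F G a b = 0%N.
Proof.
move=> hN hS; apply: (ncount_eq (l := [::])) => // v.
split=> //= -[[x [/classical_fixedP [->|[z [-> hz]]] /= <-]]] //.
by case: ifP => // hza []; apply: hS.
Qed.

Lemma N_moved_eq1 a b z0 : red_map absK red F G a b None = None ->
  s * z0 + 1 = 0 -> absK (z0 - a) <= absK b ->
  red_map absK red F G a b (Some (red ((z0 - a) / b))) <> Some (red ((z0 - a) / b)) ->
  N_moved absK red F G a b = 1%N.
Proof.
move=> hN hz0 hza hm; apply: (ncount_eq (l := [:: Some (red ((z0 - a) / b))])) => // v.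
rewrite inE; split=> [/eqP ->|].
  split=> //; exists (Some z0); split; last by rewrite /= hza.
  by apply/classical_fixedP; right; exists z0.
move=> [[x [/classical_fixedP [->|[z [-> hz]]] /= <-]]] //.
by rewrite (fixed_ptE hz) -(fixed_ptE hz0); case: ifP => // _ _; rewrite eqxx.
Qed.

Lemma reduction_cancel a b (h f g : {poly k}) : h != 0 -> coprimep f g ->
  redF0 absK red F G a b = h * f -> redG0 absK red F G a b = h * g ->
  red_deg absK red F G a b = rdeg f g /\
  forall t, red_map absK red F G a b t = rmap f g t.
Proof.
move=> hh hc hf hg; have [v hv [e1 e2]] := divp_gcdp_mul2l hh hc hf hg.
have ->: red_deg absK red F G a b = rdeg (v *: f) (v *: g) by rewrite -e1 -e2.
split=> [|t]; first exact: rdegZ.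
have ->: red_map absK red F G a b t = rmap (v *: f) (v *: g) t by rewrite -e1 -e2.
exact: rmapZ.
Qed.

Lemma red_deg_den0 a b : redG0 absK red F G a b = 0 -> red_deg absK red F G a b = 0%N.
Proof.
rewrite /red_deg /redF /redG => ->; rewrite gcdp0 div0p size_poly0 maxn0.
have [->|hf] := eqVneq (redF0 absK red F G a b) 0; first by rewrite div0p size_poly0.
by rewrite divpp // size_polyC oner_neq0.
Qed.

(* if |c| > |b|^2 the coefficients b^2 reduce to 0 *)
Lemma weight_eq0_norm_const_gt a b : b != 0 -> absK (b ^+ 2) < absK (nc a b) ->
  weight absK red F G a b = 0%N.
Proof.
move=> hb hlt; have hc' := nabs_gt0 HA (norm_const_neq0 a hb).
have hf2 : fc2 a b = 0.
  by rewrite /fc2 (red_lt1 HR) // (nabs_mul HA) (nabsV HA) mulrC ltr_pdivrMr ?mul1r.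
have eF : redF0 absK red F G a b = 1 * lin (fc0 a b) (fc1 a b).
  by rewrite redF0E hf2 quad_lin mul1r.
have eG : redG0 absK red F G a b = 1 * (gc0 a b)%:P by rewrite redG0E hf2 lin_polyC mul1r.
rewrite weight_fixedE.
have [hg0|hg0] := eqVneq (gc0 a b) 0.
  by rewrite red_deg_den0 // eG hg0 mulr0.
have [-> hm] := reduction_cancel (oner_neq0 _) (coprimep_polyC _ hg0) eF eG.
have [hf1|hf1] := eqVneq (fc1 a b) 0.
  by rewrite /rdeg hf1 lin_polyC !size_polyC hg0; case: (fc0 a b != 0).
rewrite /rdeg size_lin // size_polyC hg0 /=.
apply: N_moved_eq0; first by rewrite hm /= size_polyC hg0 size_lin.
move=> z hz hza; rewrite hm /= hornerC hg0.
have := horner_red_fixed hb hz hza; rewrite hf2 quad_lin lin_polyC hornerC => ->.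
by rewrite mulfK.
Qed.

Lemma norm_const_eq_sqP a b : b != 0 -> absK (nc a b) = absK (b ^+ 2) <->
  [/\ absK a <= absK b, absK s <= absK b & 1 <= absK b].
Proof.
move=> hb; have hb' := nabs_gt0 HA hb.
have ha0 := nabs_ge0 HA a; have hs0 := nabs_ge0 HA s.
case: (norm_const_ge a b); rewrite !(nabs_mul HA) => h0 h1 h2 h3.
split=> [hc|[ha hs hb1]].
  rewrite hc in h0 h1 h3.
  have ha : absK a <= absK b by rewrite -(ler_pM2r hb').
  have has : absK (a + s) <= absK b by rewrite -(ler_pM2l hb').
  have hs : absK s <= absK b by rewrite -[s](addKr a) (nabsD_le HA) ?(nabsN HA).
  split=> //; rewrite leNgt; apply/negP => hlt.
  have hsa : absK (s * a) < 1 by rewrite (nabs_mul HA); nra.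
  have : absK (1 + s * a) = 1 by rewrite addrC (nabsD_eq HA) (nabs1 HA).
  by nra.
apply/eqP; rewrite eq_le h2 andbT.
have : absK (1 + s * a) <= absK b * absK b.
  by rewrite (nabsD_le HA) ?(nabs1 HA) ?(nabs_mul HA) ?mulr_ege1 ?ler_pM.
have : absK (a + s) <= absK b by rewrite (nabsD_le HA).
by case: (norm_const_cases a hb) => ->; rewrite ?(nabs_mul HA) => *; nra.
Qed.

(* the denominator vanishes at red (-a/b), and the numerator there is red (1/c),
   which is zero iff |b| > 1: this decides whether X - red (-a/b) cancels *)
Lemma reduction_at_center a b : b != 0 -> absK (nc a b) = absK (b ^+ 2) ->
  [/\ fc2 a b != 0, gc0 a b + fc2 a b * red (- (a / b)) = 0 &
      fc0 a b + fc1 a b * red (- (a / b)) + fc2 a b * red (- (a / b)) ^+ 2 =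
      red ((nc a b)^-1)].
Proof.
move=> hb hc; have [ha _ _] := (norm_const_eq_sqP a hb).1 hc.
have hcn := norm_const_neq0 a hb.
have hx : absK (- (a / b)) <= 1 by rewrite (nabsN HA) mulrC (nabs_invM_le1 HA).
split.
- rewrite /fc2 (red_neq0 HR) // (nabs_mul HA) (nabsV HA) hc mulVf //.
  by rewrite (nabs_eq0E HA) expf_neq0.
- rewrite -horner_lin horner_redG0 //.
  by rewrite (_ : b ^+ 2 * - (a / b) + a * b = 0) ?mulr0 ?(red0 HA HR) //; field.
- by rewrite -horner_quad horner_redF0 //; congr red; field; rewrite hcn hb.
Qed.

Lemma reduction_quadratic a b : b != 0 -> absK (nc a b) = absK (b ^+ 2) -> absK b = 1 ->
  red_deg absK red F G a b = 2%N /\ weight absK red F G a b = 1%N.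
Proof.
move=> hb hc hb1; have [ha hs _] := (norm_const_eq_sqP a hb).1 hc.
have [h2 hg hf] := reduction_at_center hb hc.
have hc1 : absK (nc a b) = 1 by rewrite hc expr2 (nabs_mul HA) hb1 mulr1.
have hcop : coprimep (quad (fc0 a b) (fc1 a b) (fc2 a b)) (lin (gc0 a b) (fc2 a b)).
  apply: (coprimep_lin h2 hg); rewrite /root horner_quad hf.
  by rewrite (red_neq0 HR) // (nabsV HA) hc1 invr1.
have [hd hm] := reduction_cancel (oner_neq0 _) hcop
  (etrans (redF0E a b) (esym (mul1r _))) (etrans (redG0E a b) (esym (mul1r _))).
have hd2 : red_deg absK red F G a b = 2%N by rewrite hd /rdeg size_quad // size_lin.
rewrite weight_fixedE hd2 /= (@N_moved_eq0 a b) //.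
  by rewrite hm /= size_quad // size_lin.
move=> z hz hza; rewrite hm /=.
have hx : absK ((z - a) / b) <= 1 by rewrite mulrC (nabs_invM_le1 HA).
have hsz : absK s * absK z = 1.
  have hsz : s * z = -1 by apply/eqP; rewrite -addr_eq0 hz.
  by rewrite -(nabs_mul HA) hsz (nabsN HA) (nabs1 HA).
have hz1 : absK z <= 1 by rewrite -[z](subrK a) (nabsD_le HA) -?hb1.
have hgu : (lin (gc0 a b) (fc2 a b)).[red ((z - a) / b)] != 0.
  rewrite horner_redG0 // (red_neq0 HR) //.
  rewrite (_ : b ^+ 2 * ((z - a) / b) + a * b = b * z); last by field.
  rewrite (nabs_mul HA) (nabsV HA) hc1 invr1 mul1r (nabs_mul HA) hb1 mul1r.
  by have := nabs_ge0 HA z; nra.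
by rewrite (negbTE hgu) horner_red_fixed // mulfK.
Qed.

(* for |b| > 1 the reductions share the factor X - red (-a/b) and what is left
   is z |-> z + e with e the reduction of s / b *)
Lemma reduction_translation a b : b != 0 -> absK (nc a b) = absK (b ^+ 2) -> 1 < absK b ->
  exists e, [/\ red_deg absK red F G a b = 1%N,
    (forall t, red_map absK red F G a b t = transl e t),
    (e != 0 <-> absK s = absK b) &
    (weight absK red F G a b = 1%N <-> absK s = absK b)].
Proof.
move=> hb hc hb1; have [ha hs _] := (norm_const_eq_sqP a hb).1 hc.
have [h2 hg hf] := reduction_at_center hb hc.
have hb' := nabs_gt0 HA hb; have hcn := norm_const_neq0 a hb.
have hbb : absK (nc a b) = absK b * absK b by rewrite hc expr2 (nabs_mul HA).
have hf0 : fc0 a b + fc1 a b * red (- (a / b)) + fc2 a b * red (- (a / b)) ^+ 2 = 0.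
  by rewrite hf (red_lt1 HR) // (nabsV HA) invf_lt1 hbb; nra.
set q := fc1 a b + fc2 a b * red (- (a / b)).
have hq : q = red ((nc a b)^-1 * (b * s)).
  have hx : absK (- (a / b)) <= 1 by rewrite (nabsN HA) mulrC (nabs_invM_le1 HA).
  case: (norm_const_ge a b) => _ h1 h2' _.
  rewrite /q /fc1 /fc2 -(red_horner1 HA HR) ?(nabs_invM_le1 HA) //.
  by congr red; field; rewrite hb hcn.
have hqs : absK ((nc a b)^-1 * (b * s)) = absK s / absK b.
  by rewrite !(nabs_mul HA) (nabsV HA) hbb; field; rewrite gt_eqF.
have hq0 : q != 0 <-> absK s = absK b.
  rewrite hq; split=> [hq0|e]; last by rewrite (red_neq0 HR) // hqs e divff // gt_eqF.
  apply/eqP; rewrite eq_le hs /= leNgt; apply: contra hq0 => hlt.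
  by rewrite (red_lt1 HR) // hqs ltr_pdivrMr ?mul1r.
have hXt : 'X - (red (- (a / b)))%:P != 0 by rewrite -size_poly_eq0 size_XsubC.
have eG : redG0 absK red F G a b = ('X - (red (- (a / b)))%:P) * (fc2 a b)%:P.
  by rewrite redG0E (lin_XsubC hg) -mul_polyC mulrC.
have [hd hm] := reduction_cancel hXt (coprimep_polyC _ h2)
  (etrans (redF0E a b) (quad_XsubC hf0)) eG.
have hd1 : red_deg absK red F G a b = 1%N by rewrite hd rdeg_lin_polyC.
have hm' t : red_map absK red F G a b t = transl (q / fc2 a b) t.
  by rewrite hm rmap_lin_polyC.
have hes : q / fc2 a b != 0 <-> absK s = absK b.
  by rewrite -hq0 mulf_eq0 invr_eq0 (negbTE h2) orbF.
exists (q / fc2 a b); split=> //.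
rewrite weight_fixedE hd1 /= subnn add0n.
have hN : red_map absK red F G a b None = None by rewrite hm'.
split=> [hN1|e].
  apply/hes; apply: contraPneq hN1 => he.
  by rewrite (@N_moved_eq0 a b) // => z _ _; rewrite hm' he /= addr0.
have hs0 : s != 0 by rewrite -(nabs_eq0E HA) e gt_eqF.
have hz0 : s * (- s^-1) + 1 = 0 by rewrite mulrN mulfV // addNr.
apply: (N_moved_eq1 hN hz0).
  rewrite (nabsD_le HA) ?(nabsN HA) // (nabsV HA) e ltW // (lt_trans _ hb1) //.
  by rewrite invf_lt1 // (lt_trans ltr01).
rewrite hm' /= => -[] /eqP; rewrite addrC -subr_eq0 addrK.
by apply/negP/hes.
Qed.

Lemma val_Fix_eq2 a b : s != 0 -> absK (- s^-1 - a) <= absK b ->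
  val_Fix absK red F G a b = 2%N.
Proof.
move=> hs hd; have hz0 : s * (- s^-1) + 1 = 0 by rewrite mulrN mulfV // addNr.
apply: (ncount_eq (l := [:: None; Some (red ((- s^-1 - a) / b))])) => // v.
rewrite !inE; split=> [/orP [] /eqP ->|].
- by exists None; split=> //; apply/classical_fixedP; left.
- exists (Some (- s^-1)); split; last by rewrite /= hd.
  by apply/classical_fixedP; right; exists (- s^-1).
move=> [x [/classical_fixedP [->|[z [-> hz]]] <-]] /=; rewrite ?eqxx //.
by rewrite (fixed_ptE hz); case: ifP => _; rewrite ?eqxx ?orbT.
Qed.

Lemma weight_eq1P a b : b != 0 ->
  weight absK red F G a b = 1%N <-> absK a <= absK b /\ absK b = Num.max 1 (absK s).
Proof.
move=> hb; case: (norm_const_ge a b) => _ _ + _; rewrite le_eqVlt => /orP [/eqP hc|hlt].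
  have [ha hs] := (norm_const_eq_sqP a hb).1 (esym hc).
  rewrite le_eqVlt => /orP [/eqP hb1|hb1].
    have [_ ->] := reduction_quadratic hb (esym hc) (esym hb1).
    by rewrite -hb1 in ha hs *; rewrite (max_idPl hs).
  have [e [_ _ _ ->]] := reduction_translation hb (esym hc) hb1.
  split=> [hsb|[_]]; first by rewrite hsb (max_idPr (ltW hb1)).
  have [_ hb1'|_ ->] // := leP (absK s) 1.
  by move: hb1; rewrite hb1' ltxx.
rewrite weight_eq0_norm_const_gt //; split=> // -[ha hbm].
have hs : absK s <= absK b by rewrite hbm le_max lexx orbT.
have h1 : 1 <= absK b by rewrite hbm le_max lexx.
by move: hlt; rewrite (norm_const_eq_sqP a hb).2 ?ltxx.
Qed.

Lemma W1_gauss : absK s <= 1 -> W1 absK red F G 0 1.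
Proof.
move=> hs; have h1 : (1 : K) != 0 := oner_neq0 _.
have hc : absK (nc 0 1) = absK ((1 : K) ^+ 2).
  by apply/(norm_const_eq_sqP 0 h1); rewrite (nabs1 HA) (nabs0 HA) ler01.
by rewrite /W1; case: (reduction_quadratic h1 hc (nabs1 HA)) => ->.
Qed.

Lemma W3_disc_s b : 1 < absK s -> absK b = absK s -> W3 absK red F G 0 b.
Proof.
move=> hs1 hbs; have hb1 : 1 < absK b by rewrite hbs.
have hb : b != 0 by rewrite -(nabs_eq0E HA) gt_eqF // (lt_trans ltr01).
have hc : absK (nc 0 b) = absK (b ^+ 2).
  by apply/(norm_const_eq_sqP 0 hb); rewrite (nabs0 HA) (nabs_ge0 HA) hbs (ltW hs1).
have [e [hd hm he _]] := reduction_translation hb hc hb1.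
split; first by rewrite /is_fixedII hd.
split.
  exists 1, 0, 0, 1, e; split; first by rewrite mulr0 subr0 mulr1 oner_neq0.
  by split=> [|t]; [apply/he | rewrite !mobius_id hm].
have hs : s != 0 by rewrite -(nabs_eq0E HA) gt_eqF // (lt_trans ltr01).
rewrite val_Fix_eq2 // subr0 (nabsN HA) (nabsV HA) hbs ltW // (lt_trans _ hs1) //.
by rewrite invf_lt1 // (lt_trans ltr01).
Qed.

End QuadraticMap.

Theorem proposition3p1 (K : closedFieldType) (R : realType) (absK : K -> R)
    (k : fieldType) (red : K -> k) (lambda3 s : K) :
  nonarch_abs absK -> complete_abs absK -> residue_map absK red ->
  s ^+ 2 = 1 - lambda3 ->
  let F := 'X^2 + s *: 'X + 1 : {poly K} in
  let G := 'X : {poly K} in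
  (absK lambda3 <= 1 ->
     (forall a b : K, b != 0 ->
        (weight absK red F G a b = 1%N <-> same_point absK (a, b) (0, 1)))
     /\ W1 absK red F G 0 1)
  /\
  (1 < absK lambda3 ->
     (forall a b : K, b != 0 ->
        (weight absK red F G a b = 1%N <->
           absK b = Num.sqrt (absK lambda3) /\ absK a <= absK b))
     /\ (forall b : K, absK b = Num.sqrt (absK lambda3) -> W3 absK red F G 0 b)).
Proof.
move=> HA _ HR hl F G; split=> hl1.
  have hs := nabs_sqrt1B_le1 HA hl hl1.
  split; last exact: W1_gauss HA HR hs.
  move=> a b hb; rewrite weight_eq1P // (max_idPl hs) /same_point /= subr0 (nabs1 HA).
  by split=> -[ha hb1]; split; rewrite // -hb1.
have [hs hsq] := nabs_sqrt1B_gt1 HA hl hl1.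
rewrite hsq; split=> [a b hb|b]; last exact/(W3_disc_s HA HR hs).
by rewrite weight_eq1P // (max_idPr (ltW hs)); split=> -[].
Qed.
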